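(* For all $\boldsymbol\mu,\boldsymbol\mu'\in\mathcal P(\mathcal X\times[K])$ and every collection $\boldsymbol\pi=(\pi_k)_{k\in[K]}$ of decision rules $\pi_k:\mathcal X\times\mathcal P(\mathcal X\times[K])\to\mathcal P(\mathcal U)$ with $|\pi_k(x,\boldsymbol\mu_1)-\pi_k(x,\boldsymbol\mu_2)|_1\le L_Q|\boldsymbol\mu_1-\boldsymbol\mu_2|_1$ for all $x,k,\boldsymbol\mu_1,\boldsymbol\mu_2$, $$\sum_{k\in[K]}|r_k^{\mathrm{MF}}(\boldsymbol\mu,\boldsymbol\pi)-r_k^{\mathrm{MF}}(\boldsymbol\mu',\boldsymbol\pi)|\le S_R|\boldsymbol\mu-\boldsymbol\mu'|_1,\qquad S_R=M_R(1+L_Q)+L_R(2+L_Q).$$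
   Context: $K\ge1$, $[K]=\{1,\dots,K\}$, $\mathcal X,\mathcal U$ finite, $\mathcal P(A)$ the probability distributions on $A$, $|\cdot|_1$ the $L_1$ norm, $M_R,L_R,L_Q>0$. For each $k$, $r_k:\mathcal X\times\mathcal U\times\mathcal P(\mathcal X\times[K])\times\mathcal P(\mathcal U\times[K])\to\mathbb R$ satisfies $|r_k(x,u,\boldsymbol\mu_1,\boldsymbol\nu_1)|\le M_R$ and $|r_k(x,u,\boldsymbol\mu_1,\boldsymbol\nu_1)-r_k(x,u,\boldsymbol\mu_2,\boldsymbol\nu_2)|\le L_R(|\boldsymbol\mu_1-\boldsymbol\mu_2|_1+|\boldsymbol\nu_1-\boldsymbol\nu_2|_1)$ for all arguments. Define $\nu^{\mathrm{MF}}(\boldsymbol\mu,\boldsymbol\pi)(u,k)=\sum_x\pi_k(x,\boldsymbol\mu)(u)\boldsymbol\mu(x,k)$ and $r_k^{\mathrm{MF}}(\boldsymbol\mu,\boldsymbol\pi)=\sum_{x\in\mathcal X}\sum_{u\in\mathcal U}\boldsymbol\mu(x,k)\pi_k(x,\boldsymbol\mu)(u)\,r_k(x,u,\boldsymbol\mu,\nu^{\mathrm{MF}}(\boldsymbol\mu,\boldsymbol\pi))$. *)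

From HB Require Import structures.
From mathcomp Require Import all_boot all_order all_algebra.
From mathcomp Require Import reals.
Set Implicit Arguments. Unset Strict Implicit. Unset Printing Implicit Defensive.
Import Order.TTheory GRing.Theory Num.Theory.
Local Open Scope ring_scope.

Definition is_distr (R : realType) (T : finType) (p : {ffun T -> R}) : Prop :=
  (forall t, 0 <= p t) /\ \sum_(t : T) p t = 1.

Definition l1dist (R : realType) (T : finType) (p q : {ffun T -> R}) : R :=
  \sum_(t : T) `|p t - q t|.

Definition nuMF (R : realType) (X U : finType) (K : nat)
  (pi : 'I_K -> X -> {ffun X * 'I_K -> R} -> {ffun U -> R})
  (mu : {ffun X * 'I_K -> R}) : {ffun U * 'I_K -> R} :=
  [ffun uk : U * 'I_K => \sum_(x : X) pi uk.2 x mu uk.1 * mu (x, uk.2)].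

Definition rMF (R : realType) (X U : finType) (K : nat)
  (r : 'I_K -> X -> U -> {ffun X * 'I_K -> R} -> {ffun U * 'I_K -> R} -> R)
  (pi : 'I_K -> X -> {ffun X * 'I_K -> R} -> {ffun U -> R})
  (k : 'I_K) (mu : {ffun X * 'I_K -> R}) : R :=
  \sum_(x : X) \sum_(u : U) mu (x, k) * pi k x mu u * r k x u mu (nuMF pi mu).

From HB Require Import structures.
From mathcomp Require Import all_boot all_order all_algebra.
From mathcomp Require Import reals.
From mathcomp Require Import ring.
Import Order.TTheory GRing.Theory Num.Theory.
Local Open Scope ring_scope.

(* Let rho_mu((x,k),u) = mu(x,k) pi_k(x,mu)(u) be the joint law of state, class
   and action, and D = |mu - mu'|_1.  Then nu^MF(mu) is the (u,k)-marginal of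
   rho_mu and r_k^MF(mu) is the rho_mu-expectation of the reward over class k.
   Splitting mu pi - mu' pi' = (mu - mu') pi + mu' (pi - pi') gives
   |rho_mu - rho_mu'|_1 <= (1 + L_Q) D; marginals contract the L1 distance, so
   the same bound holds for nu^MF; and splitting
   rho r - rho' r' = (rho - rho') r + rho' (r - r') bounds the summed reward
   gap by M_R (1 + L_Q) D + L_R (D + (1 + L_Q) D). *)

Lemma ler_norm_mulB {R : numDomainType} (a a' s s' : R) :
  `|a * s - a' * s'| <= `|a - a'| * `|s| + `|a'| * `|s - s'|.
Proof.
have -> : a * s - a' * s' = (a - a') * s + a' * (s - s') by ring.
by rewrite -!normrM ler_normD.
Qed.

Lemma sum_pair {V : nmodType} {A B : finType} (F : A * B -> V) :
  \sum_(t : A * B) F t = \sum_(a : A) \sum_(b : B) F (a, b).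
Proof. by rewrite pair_bigA; apply: eq_bigr => -[]. Qed.

Lemma sum_pair_swap {V : nmodType} {A B : finType} (F : A * B -> V) :
  \sum_(t : A * B) F t = \sum_(b : B) \sum_(a : A) F (a, b).
Proof. by rewrite sum_pair exchange_big. Qed.

Lemma sum_pair3 {V : nmodType} {A B C : finType} (F : (A * C) * B -> V) :
  \sum_(t : (A * C) * B) F t = \sum_(c : C) \sum_(a : A) \sum_(b : B) F ((a, c), b).
Proof. by rewrite sum_pair (sum_pair_swap (fun ac => \sum_b F (ac, b))). Qed.

Section Distributions.
Context {R : realType}.

Lemma sum_normB_mul_le {I : finType} (rho rho' : {ffun I -> R}) (s s' : I -> R)
    (M c : R) :
  is_distr rho' -> (forall i, `|s i| <= M) -> (forall i, `|s i - s' i| <= c) ->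
  \sum_i `|rho i * s i - rho' i * s' i| <= M * l1dist rho rho' + c.
Proof.
move=> [rho'_ge0 rho'_sum] s_bound s_lip.
apply: (@le_trans _ _ (\sum_i (`|rho i - rho' i| * M + rho' i * c))).
  apply: ler_sum => i _; apply: le_trans (ler_norm_mulB _ _ _ _) _.
  by rewrite (ger0_norm (rho'_ge0 i)); apply: lerD; apply: ler_wpM2l.
by rewrite big_split /= -!mulr_suml rho'_sum mul1r mulrC.
Qed.

Section Mixture.
Context {A B : finType}.

Definition mixture (a : {ffun A -> R}) (p : A -> {ffun B -> R}) :
    {ffun A * B -> R} :=
  [ffun t => a t.1 * p t.1 t.2].

Lemma mixture_distr a p :
  is_distr a -> (forall t, is_distr (p t)) -> is_distr (mixture a p).
Proof.
move=> [a_ge0 a_sum] p_distr; split=> [t|].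
  by rewrite ffunE mulr_ge0 //; case: (p_distr t.1).
rewrite sum_pair -a_sum; apply: eq_bigr => t _.
under eq_bigr do rewrite ffunE /=.
by rewrite -mulr_sumr (proj2 (p_distr t)) mulr1.
Qed.

Lemma l1dist_mixture a a' p p' c :
  (forall t, is_distr (p t)) -> is_distr a' ->
  (forall t, l1dist (p t) (p' t) <= c) ->
  l1dist (mixture a p) (mixture a' p') <= l1dist a a' + c.
Proof.
move=> p_distr [a'_ge0 a'_sum] p_lip.
apply: (@le_trans _ _ (\sum_t (`|a t - a' t| + a' t * c))); last first.
  by rewrite big_split /= -mulr_suml a'_sum mul1r.
rewrite /l1dist sum_pair; apply: ler_sum => t _.
apply: (@le_trans _ _
  (\sum_b (`|a t - a' t| * `|p t b| + `|a' t| * `|p t b - p' t b|))).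
  by apply: ler_sum => b _; rewrite !ffunE ler_norm_mulB.
have [p_ge0 p_sum] := p_distr t.
rewrite big_split /= -!mulr_sumr (eq_bigr _ (fun b _ => ger0_norm (p_ge0 b))).
rewrite p_sum mulr1 lerD2l (ger0_norm (a'_ge0 t)).
by apply: ler_wpM2l; [exact: a'_ge0 | exact: p_lip].
Qed.

End Mixture.

Section Marginal.
Context {A B C : finType}.

Definition marginal (rho : {ffun (A * C) * B -> R}) : {ffun B * C -> R} :=
  [ffun s => \sum_a rho ((a, s.2), s.1)].

Lemma sum_marginal (F : (A * C) * B -> R) :
  \sum_(s : B * C) \sum_a F ((a, s.2), s.1) = \sum_t F t.
Proof.
rewrite sum_pair3 sum_pair_swap.
by apply: eq_bigr => c _; rewrite exchange_big.
Qed.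

Lemma marginal_distr rho : is_distr rho -> is_distr (marginal rho).
Proof.
move=> [rho_ge0 rho_sum]; split=> [s|]; first by rewrite ffunE sumr_ge0.
by rewrite -rho_sum -sum_marginal; apply: eq_bigr => s _; rewrite ffunE.
Qed.

Lemma l1dist_marginal rho rho' :
  l1dist (marginal rho) (marginal rho') <= l1dist rho rho'.
Proof.
rewrite /l1dist -(sum_marginal (fun t => `|rho t - rho' t|)).
by apply: ler_sum => s _; rewrite !ffunE -sumrB ler_norm_sum.
Qed.

End Marginal.

Section MeanField.
Context {X U : finType} {K : nat}.

Definition joint (pi : 'I_K -> X -> {ffun X * 'I_K -> R} -> {ffun U -> R})
    (mu : {ffun X * 'I_K -> R}) : {ffun (X * 'I_K) * U -> R} :=
  mixture mu (fun t => pi t.2 t.1 mu).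

Context { pi : 'I_K -> X -> {ffun X * 'I_K -> R} -> {ffun U -> R} }.

Lemma nuMF_marginal mu : nuMF pi mu = marginal (joint pi mu).
Proof.
apply/ffunP => -[u k]; rewrite !ffunE.
by apply: eq_bigr => x _; rewrite ffunE mulrC.
Qed.

Lemma rMF_joint r k mu :
  rMF r pi k mu =
    \sum_x \sum_u joint pi mu ((x, k), u) * r k x u mu (nuMF pi mu).
Proof. by apply: eq_bigr => x _; apply: eq_bigr => u _; rewrite ffunE. Qed.

Hypothesis pi_distr : forall k x m, is_distr m -> is_distr (pi k x m).

Lemma joint_distr mu : is_distr mu -> is_distr (joint pi mu).
Proof. by move=> mu_distr; apply: mixture_distr => // t; apply: pi_distr. Qed.

Lemma nuMF_distr mu : is_distr mu -> is_distr (nuMF pi mu).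
Proof. by move=> mu_distr; rewrite nuMF_marginal; apply/marginal_distr/joint_distr. Qed.

Context {L_Q : R}.
Hypothesis pi_lip : forall k x m1 m2, is_distr m1 -> is_distr m2 ->
  l1dist (pi k x m1) (pi k x m2) <= L_Q * l1dist m1 m2.

Lemma l1dist_joint mu mu' : is_distr mu -> is_distr mu' ->
  l1dist (joint pi mu) (joint pi mu') <= (1 + L_Q) * l1dist mu mu'.
Proof.
move=> mu_distr mu'_distr; rewrite mulrDl mul1r.
apply: l1dist_mixture => // [t|t]; first exact: pi_distr.
exact: pi_lip.
Qed.

Lemma l1dist_nuMF mu mu' : is_distr mu -> is_distr mu' ->
  l1dist (nuMF pi mu) (nuMF pi mu') <= (1 + L_Q) * l1dist mu mu'.
Proof.
move=> mu_distr mu'_distr; rewrite !nuMF_marginal.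
apply: le_trans (l1dist_marginal _ _) _.
exact: l1dist_joint.
Qed.

End MeanField.

End Distributions.

Theorem lemma3 (R : realType) (X U : finType) (K : nat) (hK : (1 <= K)%N)
  (M_R L_R L_Q : R) (hM : 0 < M_R) (hLR : 0 < L_R) (hLQ : 0 < L_Q)
  (r : 'I_K -> X -> U -> {ffun X * 'I_K -> R} -> {ffun U * 'I_K -> R} -> R)
  (r_bound : forall k x u mu nu, is_distr mu -> is_distr nu ->
      `|r k x u mu nu| <= M_R)
  (r_lip : forall k x u mu1 nu1 mu2 nu2,
      is_distr mu1 -> is_distr nu1 -> is_distr mu2 -> is_distr nu2 ->
      `|r k x u mu1 nu1 - r k x u mu2 nu2| <=
        L_R * (l1dist mu1 mu2 + l1dist nu1 nu2))
  (mu mu' : {ffun X * 'I_K -> R}) (hmu : is_distr mu) (hmu' : is_distr mu')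
  (pi : 'I_K -> X -> {ffun X * 'I_K -> R} -> {ffun U -> R})
  (pi_distr : forall k x m, is_distr m -> is_distr (pi k x m))
  (pi_lip : forall k x m1 m2, is_distr m1 -> is_distr m2 ->
      l1dist (pi k x m1) (pi k x m2) <= L_Q * l1dist m1 m2) :
  \sum_(k < K) `|rMF r pi k mu - rMF r pi k mu'| <=
    (M_R * (1 + L_Q) + L_R * (2 + L_Q)) * l1dist mu mu'.
Proof.
set D := l1dist mu mu'.
have nu_distr m : is_distr m -> is_distr (nuMF pi m) by exact: nuMF_distr.
pose reward m (t : (X * 'I_K) * U) := r t.1.2 t.1.1 t.2 m (nuMF pi m).
have split_classes : \sum_(k < K) `|rMF r pi k mu - rMF r pi k mu'| <=
    \sum_t `|joint pi mu t * reward mu t - joint pi mu' t * reward mu' t|.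
  rewrite sum_pair3; apply: ler_sum => k _; rewrite !rMF_joint -sumrB.
  apply: le_trans (ler_norm_sum _ _ _) _; apply: ler_sum => x _.
  by rewrite -sumrB ler_norm_sum.
have reward_lip t : `|reward mu t - reward mu' t| <= L_R * (D + (1 + L_Q) * D).
  apply: le_trans
    (r_lip _ _ _ _ _ _ _ hmu (nu_distr _ hmu) hmu' (nu_distr _ hmu')) _.
  apply: ler_wpM2l; first exact: ltW.
  by rewrite lerD2l; apply: l1dist_nuMF.
apply: le_trans split_classes _.
apply: (@le_trans _ _ (M_R * l1dist (joint pi mu) (joint pi mu')
                        + L_R * (D + (1 + L_Q) * D))).
  apply: (sum_normB_mul_le _ _ (reward mu) (reward mu') _ _ _ _ reward_lip).
    exact: joint_distr.
  by move=> t; apply: r_bound; [exact: hmu | exact: nu_distr].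
have -> : (M_R * (1 + L_Q) + L_R * (2 + L_Q)) * D =
    M_R * ((1 + L_Q) * D) + L_R * (D + (1 + L_Q) * D) by ring.
by rewrite lerD2r; apply: ler_wpM2l; [exact: ltW | exact: l1dist_joint].
Qed.
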